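(* Let $R$ be a commutative ring with $1$, let $M$ be an le-module over $R$, and suppose the natural map $\psi:\mathrm{Spec}(M)\to\mathrm{Spec}(R/Ann(M))$ is surjective. Then: (i) a subset $Y\subseteq\mathrm{Spec}(M)$ is an irreducible closed subset of $\mathrm{Spec}(M)$ if and only if $Y=V^*(p)$ for some $p\in\mathrm{Spec}(M)$; every irreducible closed subset of $\mathrm{Spec}(M)$ has a generic point; (ii) the correspondence $p\mapsto V^*(p)$ is a surjection of $\mathrm{Spec}(M)$ onto the set of irreducible closed subsets of $\mathrm{Spec}(M)$; (iii) the correspondence $V^*(p)\mapsto (p:e)/Ann(M)$ is a bijection of the set of irreducible components of $\mathrm{Spec}(M)$ onto the set of minimal prime ideals of $R/Ann(M)$.
   Context: An le-module over $R$ is a complete lattice $(M,\leq)$ with greatest element $e$, with a commutative monoid operation $+$ (identity $0_M$) satisfying $m+\bigvee_{i}m_i=\bigvee_i(m+m_i)$ for all families, and a map $R\times M\to M$, $(r,m)\mapsto rm$, such that for all $r,r_1,r_2\in R$, $m,m_1,m_2,m_i\in M$: $r(m_1+m_2)=rm_1+rm_2$; $(r_1+r_2)m\leq r_1m+r_2m$; $(r_1r_2)m=r_1(r_2m)$; $1_Rm=m$; $0_Rm=r0_M=0_M$; $r(\bigvee_i m_i)=\bigvee_i rm_i$. A submodule element is $n\in M$ with $n+n\leq n$ and $rn\leq n$ for all $r\in R$; it is proper if $n\neq e$. For $n\in M$ put $(n:e)=\{r\in R: re\leq n\}$, and $Ann(M)=(0_M:e)$. A prime submodule element is a proper submodule element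 $p$ such that for all $r\in R$, $n\in M$, $rn\leq p$ implies $r\in(p:e)$ or $n\leq p$; $\mathrm{Spec}(M)$ denotes the set of prime submodule elements. For a submodule element $n$, $V^*(n)=\{p\in\mathrm{Spec}(M):(n:e)\subseteq(p:e)\}$; the Zariski topology on $\mathrm{Spec}(M)$ has as closed sets exactly the sets $V^*(n)$, $n$ a submodule element. For $p\in\mathrm{Spec}(M)$, $(p:e)$ is a prime ideal containing $Ann(M)$ and the natural map is $\psi(p)=(p:e)/Ann(M)$. A generic point of a closed set $Y$ is $y\in Y$ with $Y=\overline{\{y\}}$; an irreducible component is a maximal irreducible subset. *)

From mathcomp Require Import all_boot all_algebra.
From mathcomp Require Import boolp classical_sets.
Set Implicit Arguments. Unset Strict Implicit. Unset Printing Implicit Defensive.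
Import GRing.Theory.
Local Open Scope classical_set_scope.
Local Open Scope ring_scope.

(* Joins of families are represented as suprema of subsets of M        *)
(* (the join of a family (m_i)_i is the sup of its image set).         *)
Record leModule (R : comNzRingType) := LeModule {
  lm_car :> Type;
  lm_le : lm_car -> lm_car -> Prop;
  lm_sup : set lm_car -> lm_car;
  lm_top : lm_car;
  lm_add : lm_car -> lm_car -> lm_car;
  lm_zero : lm_car;
  lm_act : R -> lm_car -> lm_car;
  lm_le_refl : forall m, lm_le m m;
  lm_le_antisym : forall m n, lm_le m n -> lm_le n m -> m = n;
  lm_le_trans : forall m n k, lm_le m n -> lm_le n k -> lm_le m k;
  lm_sup_ub : forall (S : set lm_car) m, S m -> lm_le m (lm_sup S);
  lm_sup_least : forall (S : set lm_car) u,
      (forall m, S m -> lm_le m u) -> lm_le (lm_sup S) u;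
  lm_top_greatest : forall m, lm_le m lm_top;
  lm_addC : forall m n, lm_add m n = lm_add n m;
  lm_addA : forall m n k, lm_add m (lm_add n k) = lm_add (lm_add m n) k;
  lm_add0 : forall m, lm_add m lm_zero = m;
  lm_add_sup : forall m (S : set lm_car), S !=set0 ->
      lm_add m (lm_sup S) = lm_sup [set lm_add m x | x in S];
  lm_actD : forall r m1 m2, lm_act r (lm_add m1 m2) = lm_add (lm_act r m1) (lm_act r m2);
  lm_addr_act : forall r1 r2 m,
      lm_le (lm_act (r1 + r2) m) (lm_add (lm_act r1 m) (lm_act r2 m));
  lm_actM : forall r1 r2 m, lm_act (r1 * r2) m = lm_act r1 (lm_act r2 m);
  lm_act1 : forall m, lm_act 1 m = m;
  lm_act0r : forall m, lm_act 0 m = lm_zero;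
  lm_act0 : forall r, lm_act r lm_zero = lm_zero;
  lm_act_sup : forall r (S : set lm_car),
      lm_act r (lm_sup S) = lm_sup [set lm_act r x | x in S]
}.

Section LeModuleDefs.
Variables (R : comNzRingType) (M : leModule R).

Local Notation le := (@lm_le R M).
Local Notation e := (@lm_top R M).

Definition submodule_elt (n : M) : Prop :=
  le (lm_add n n) n /\ forall r : R, le (lm_act r n) n.

Definition colon (n : M) : set R := [set r | le (lm_act r e) n].

Definition Ann : set R := colon (lm_zero M).

Definition prime_elt (p : M) : Prop :=
  submodule_elt p /\ p <> e /\
  forall (r : R) (n : M), le (lm_act r n) p -> colon p r \/ le n p.

Definition SpecM : set M := [set p | prime_elt p].

Definition Vstar (n : M) : set M := [set p | prime_elt p /\ colon n `<=` colon p].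

Definition zclosed (Y : set M) : Prop := exists n, submodule_elt n /\ Y = Vstar n.

Definition zclosure (S : set M) : set M :=
  [set x | forall F, zclosed F -> S `<=` F -> F x].

Definition zirreducible (Y : set M) : Prop :=
  Y `<=` SpecM /\ Y !=set0 /\
  forall F1 F2, zclosed F1 -> zclosed F2 -> Y `<=` F1 `|` F2 -> Y `<=` F1 \/ Y `<=` F2.

Definition generic_point (Y : set M) (y : M) : Prop := Y y /\ Y = zclosure [set y].

Definition irreducible_component (Y : set M) : Prop :=
  zirreducible Y /\ forall Z, zirreducible Z -> Y `<=` Z -> Z = Y.

End LeModuleDefs.

Section Ideals.
Variable R : comNzRingType.

Definition is_ideal (I : set R) : Prop :=
  I 0 /\ (forall x y, I x -> I y -> I (x + y)) /\ (forall r x, I x -> I (r * x)).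

Definition prime_ideal (P : set R) : Prop :=
  is_ideal P /\ ~ P 1 /\ forall a b, P (a * b) -> P a \/ P b.

(* Prime ideals of R/J  <->  prime ideals of R containing J. *)
Definition prime_over (J P : set R) : Prop := prime_ideal P /\ J `<=` P.

(* Minimal prime ideals of R/J  <->  prime ideals of R minimal over J. *)
Definition minimal_prime_over (J P : set R) : Prop :=
  prime_over J P /\ forall Q, prime_over J Q -> Q `<=` P -> Q = P.

End Ideals.

(* The colon map p |-> (p:e) governs the topology: V*(n) is the set of primes
   whose colon ideal contains (n:e), so every closed set containing p contains
   V*(p).  Hence V*(p) is the closure of p: it is irreducible, with generic
   point p, and V*(p) <= V*(q) iff (q:e) <= (p:e).  Conversely the intersection
   of the colon ideals of an irreducible set Y is a prime ideal over Ann(M);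
   surjectivity of psi lifts it to a prime p with Y <= V*(p), with equality when
   Y is closed or maximal irreducible.  Maximal sets V*(p) thus correspond to
   minimal primes (p:e). *)
From mathcomp Require Import all_boot all_algebra.
From mathcomp Require Import boolp classical_sets.
Set Implicit Arguments. Unset Strict Implicit. Unset Printing Implicit Defensive.
Local Open Scope classical_set_scope.
Local Open Scope ring_scope.

Section LeModuleTheory.
Variables (R : comNzRingType) (M : leModule R).
Local Notation le := (@lm_le R M).
Local Notation e := (@lm_top R M).
Local Notation add := (@lm_add R M).
Local Notation act := (@lm_act R M).

Lemma lm_sup_pair (m n : M) : le m n -> lm_sup [set x | x = m \/ x = n] = n.
Proof.
move=> le_mn; apply: lm_le_antisym.
  by apply: lm_sup_least => x [->|->] //; apply: lm_le_refl.
by apply: lm_sup_ub; right.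
Qed.

Lemma lm_leDl (k m n : M) : le m n -> le (add k m) (add k n).
Proof.
move=> le_mn; rewrite -(lm_sup_pair le_mn) lm_add_sup; last by exists m; left.
by apply: lm_sup_ub; exists m => //; left.
Qed.

Lemma lm_leD (a b c d : M) : le a b -> le c d -> le (add a c) (add b d).
Proof.
move=> le_ab le_cd; apply: lm_le_trans (lm_leDl a le_cd) _.
by rewrite (lm_addC a) (lm_addC b); apply: lm_leDl.
Qed.

Lemma lm_le_act r (m n : M) : le m n -> le (act r m) (act r n).
Proof.
move=> le_mn; rewrite -(lm_sup_pair le_mn) lm_act_sup.
by apply: lm_sup_ub; exists m => //; left.
Qed.

Lemma colonS (n m : M) : le n m -> colon n `<=` colon m.
Proof. by move=> le_nm r /= le_r; apply: lm_le_trans le_r le_nm. Qed.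

Lemma submodule_elt_ge0 (p : M) : submodule_elt p -> le (lm_zero M) p.
Proof. by move=> [_ actp]; have := actp 0; rewrite lm_act0r. Qed.

Lemma colon_prime_over (p : M) : prime_elt p -> prime_over (Ann M) (colon p).
Proof.
move=> [[addp actp] [p_neq_e primep]].
have ge0p := submodule_elt_ge0 (conj addp actp).
split; last by apply: colonS.
split; [split; [|split]|split].
- by rewrite /colon /= lm_act0r.
- move=> x y /= px py; apply: lm_le_trans (lm_addr_act _ _ _) _.
  exact: lm_le_trans (lm_leD px py) addp.
- move=> r x /= px; rewrite /colon /= lm_actM.
  exact: lm_le_trans (lm_le_act r px) (actp r).
- move=> /= p1; apply: p_neq_e; apply: lm_le_antisym (lm_top_greatest _) _.
  by rewrite /colon /= lm_act1 in p1.
- by move=> a b /=; rewrite /colon /= lm_actM => /primep.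
Qed.

Definition lm_inf (T : set M) : M := lm_sup [set x | forall q, T q -> le x q].

Lemma lm_inf_lb (T : set M) q : T q -> le (lm_inf T) q.
Proof. by move=> Tq; apply: lm_sup_least => x /= /(_ q Tq). Qed.

Lemma lm_inf_glb (T : set M) x : (forall q, T q -> le x q) -> le x (lm_inf T).
Proof. by move=> lbx; apply: lm_sup_ub. Qed.

Lemma submodule_elt_inf (T : set M) :
  (forall q, T q -> submodule_elt q) -> submodule_elt (lm_inf T).
Proof.
move=> subT; split.
  apply: lm_inf_glb => q Tq; have [addq _] := subT q Tq.
  exact: lm_le_trans (lm_leD (lm_inf_lb Tq) (lm_inf_lb Tq)) addq.
move=> r; apply: lm_inf_glb => q Tq; have [_ actq] := subT q Tq.
exact: lm_le_trans (lm_le_act r (lm_inf_lb Tq)) (actq r).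
Qed.

Definition Videal (J : set R) : set M := [set q | prime_elt q /\ J `<=` colon q].

Lemma VstarE (n : M) : Vstar n = Videal (colon n).
Proof. by []. Qed.

Lemma zclosed_Videal (J : set R) : zclosed (Videal J).
Proof.
exists (lm_inf (Videal J)); split; first by apply: submodule_elt_inf => q [[]].
apply/seteqP; split => q /= [primeq sub_q]; split => //.
  exact: colonS (lm_inf_lb (conj primeq sub_q)).
by move=> r Jr; apply: sub_q; apply: lm_inf_glb => q' [_]; apply.
Qed.

Lemma Vstar_self (p : M) : prime_elt p -> Vstar p p.
Proof. by split. Qed.

Lemma zclosed_Vstar (p : M) : prime_elt p -> zclosed (Vstar p).
Proof. by case=> subp _; exists p. Qed.

Lemma zclosed_Vstar_sub (F : set M) (p : M) : zclosed F -> F p -> Vstar p `<=` F.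
Proof.
move=> [n [_ ->]] [_ sub_np] q [primeq sub_pq].
by split => //; apply: subset_trans sub_pq.
Qed.

Lemma Vstar_subset (p q : M) : prime_elt p ->
  Vstar p `<=` Vstar q <-> colon q `<=` colon p.
Proof.
move=> primep; split; first by move=> /(_ p (Vstar_self primep)) [].
by move=> sub_qp x [primex sub_px]; split => //; apply: subset_trans sub_px.
Qed.

Lemma Vstar_eq_colon (p q : M) : prime_elt p -> prime_elt q ->
  Vstar p = Vstar q -> colon p = colon q.
Proof.
move=> primep primeq Vpq; apply/seteqP; split.
  by apply/(Vstar_subset _ primeq); rewrite Vpq.
by apply/(Vstar_subset _ primep); rewrite Vpq.
Qed.

Lemma zirreducible_Vstar (p : M) : prime_elt p -> zirreducible (Vstar p).
Proof.
move=> primep; split; first by move=> q [].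
split; first by exists p; apply: Vstar_self.
move=> F1 F2 cF1 cF2 /(_ p (Vstar_self primep)) [F1p|F2p];
  by [left; apply: zclosed_Vstar_sub | right; apply: zclosed_Vstar_sub].
Qed.

Lemma zclosure_Vstar (p : M) : prime_elt p -> zclosure [set p] = Vstar p.
Proof.
move=> primep; apply/seteqP; split => q.
  by move/(_ (Vstar p)); apply; [apply: zclosed_Vstar | move=> _ ->; apply: Vstar_self].
by move=> Vpq F cF /(_ p erefl) Fp; exact: zclosed_Vstar_sub cF Fp q Vpq.
Qed.

Lemma Vstar_generic_point (p : M) : prime_elt p -> generic_point (Vstar p) p.
Proof. by move=> primep; split; [apply: Vstar_self | rewrite zclosure_Vstar]. Qed.

Definition ideal_of (Y : set M) : set R := [set r | forall q, Y q -> colon q r].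

Lemma sub_Videal_ideal_of (Y : set M) :
  Y `<=` @SpecM R M -> Y `<=` Videal (ideal_of Y).
Proof. by move=> YS q Yq; split; [apply: YS | move=> r; apply]. Qed.

Lemma ideal_of_prime_over (Y : set M) :
  zirreducible Y -> prime_over (Ann M) (ideal_of Y).
Proof.
move=> [YS [[y Yy] irrY]].
have colonP q : Y q -> prime_over (Ann M) (colon q).
  by move=> Yq; apply/colon_prime_over/YS.
split; last by move=> r Ar q Yq; apply: (colonP q Yq).2.
split; [split; [|split]|split].
- by move=> q /colonP [[[]]].
- by move=> a b Ia Ib q Yq; have [[[_ [+ _]] _] _] := colonP q Yq; apply; auto.
- by move=> r a Ia q Yq; have [[[_ [_ +]] _] _] := colonP q Yq; apply; auto.
- by move=> I1; have [[_ [+ _]] _] := colonP y Yy; apply; apply: I1.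
- move=> a b Iab.
  have cover : Y `<=` Videal [set a] `|` Videal [set b].
    move=> q Yq; have [[_ [_ primeq]] _] := colonP q Yq.
    by case: (primeq a b (Iab q Yq)) => ?; [left|right]; split => [|_ ->] //; apply: YS.
  by case: (irrY _ _ (zclosed_Videal _) (zclosed_Videal _) cover) => sub;
    [left|right] => q /sub [_]; apply.
Qed.

Section SurjectivePsi.
Hypothesis psi_surj : forall P : set R, prime_over (Ann M) P ->
  exists p : M, SpecM p /\ colon p = P.

Lemma zirreducible_sub_Vstar (Y : set M) : zirreducible Y ->
  exists p, SpecM p /\ colon p = ideal_of Y /\ Y `<=` Vstar p.
Proof.
move=> irrY; have [p [Sp colonp]] := psi_surj (ideal_of_prime_over irrY).
exists p; split => //; split => //; rewrite VstarE colonp.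
by apply: sub_Videal_ideal_of; case: irrY.
Qed.

Lemma zclosed_irreducible_Vstar (Y : set M) : zclosed Y -> zirreducible Y ->
  exists p : M, SpecM p /\ Y = Vstar p.
Proof.
move=> cY irrY; have [p [Sp [colonp sub_Yp]]] := zirreducible_sub_Vstar irrY.
have [n [_ defY]] := cY.
have Yp : Y p.
  rewrite {1}defY; split => //; rewrite colonp => r nr q.
  by rewrite defY => -[_]; apply.
by exists p; split => //; apply/seteqP; split => //; apply: zclosed_Vstar_sub.
Qed.

Lemma irreducible_component_Vstar (Y : set M) :
  irreducible_component Y -> exists p, SpecM p /\ Y = Vstar p.
Proof.
move=> [irrY maxY]; have [p [Sp [_ sub_Yp]]] := zirreducible_sub_Vstar irrY.
by exists p; split => //; symmetry; apply: maxY sub_Yp; apply: zirreducible_Vstar.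
Qed.

Lemma irreducible_component_minimal_prime (p : M) : SpecM p ->
  irreducible_component (Vstar p) -> minimal_prime_over (Ann M) (colon p).
Proof.
move=> Sp [_ maxVp]; split; first exact: colon_prime_over.
move=> Q primeQ sub_Qp; have [q [Sq colonq]] := psi_surj primeQ.
rewrite -colonq; apply: Vstar_eq_colon => //; apply: maxVp.
  exact: zirreducible_Vstar.
by apply/Vstar_subset => //; rewrite colonq.
Qed.

Lemma minimal_prime_irreducible_component (P : set R) :
  minimal_prime_over (Ann M) P ->
  exists p : M, SpecM p /\ irreducible_component (Vstar p) /\ colon p = P.
Proof.
move=> [primeP minP]; have [p [Sp colonp]] := psi_surj primeP.
exists p; split => //; split => //; split; first exact: zirreducible_Vstar.
move=> Z irrZ sub_pZ; have IZ_eq : ideal_of Z = colon p.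
  rewrite colonp; apply: minP; first exact: ideal_of_prime_over.
  by rewrite -colonp => r; apply; apply/sub_pZ/Vstar_self.
apply/seteqP; split => //; rewrite VstarE -IZ_eq.
by apply: sub_Videal_ideal_of; case: irrZ.
Qed.

End SurjectivePsi.
End LeModuleTheory.

Theorem theorem6p6 (R : comNzRingType) (M : leModule R)
  (psi_surj : forall P : set R, prime_over (Ann M) P ->
                exists p : M, SpecM p /\ colon p = P) :
  (* (i) *)
  ((forall Y : set M, (zclosed Y /\ zirreducible Y) <-> exists p, SpecM p /\ Y = Vstar p)
   /\ (forall Y : set M, zclosed Y -> zirreducible Y -> exists y, generic_point Y y))
  (* (ii) p |-> V*(p) maps Spec(M) onto the irreducible closed subsets *)
  /\ ((forall p : M, SpecM p -> zclosed (Vstar p) /\ zirreducible (Vstar p))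
      /\ (forall Y : set M, zclosed Y -> zirreducible Y ->
            exists p, SpecM p /\ Y = Vstar p))
  (* (iii) V*(p) |-> (p:e)/Ann(M) is a bijection from irreducible components
     onto minimal primes of R/Ann(M) *)
  /\ ((forall Y : set M, irreducible_component Y -> exists p, SpecM p /\ Y = Vstar p)
      /\ (forall p q : M, SpecM p -> SpecM q -> Vstar p = Vstar q -> colon p = colon q)
      /\ (forall p : M, SpecM p -> irreducible_component (Vstar p) ->
            minimal_prime_over (Ann M) (colon p))
      /\ (forall p q : M, SpecM p -> SpecM q ->
            irreducible_component (Vstar p) -> irreducible_component (Vstar q) ->
            colon p = colon q -> Vstar p = Vstar q)
      /\ (forall P : set R, minimal_prime_over (Ann M) P ->
            exists p : M, SpecM p /\ irreducible_component (Vstar p) /\ colon p = P)).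
Proof.
have closed_irr_Vstar p : SpecM p -> zclosed (Vstar p) /\ zirreducible (Vstar p).
  by move=> Sp; split; [apply: zclosed_Vstar | apply: zirreducible_Vstar].
have closed_irr_is_Vstar := zclosed_irreducible_Vstar psi_surj.
split; [split|split; [split|split; [|split; [|split; [|split]]]]].
- move=> Y; split; first by move=> [cY irrY]; apply: closed_irr_is_Vstar.
  by move=> [p [Sp ->]]; apply: closed_irr_Vstar.
- move=> Y cY irrY; have [p [Sp ->]] := closed_irr_is_Vstar Y cY irrY.
  by exists p; apply: Vstar_generic_point.
- exact: closed_irr_Vstar.
- exact: closed_irr_is_Vstar.
- exact: irreducible_component_Vstar.
- exact: Vstar_eq_colon.
- exact: irreducible_component_minimal_prime.
- by move=> p q _ _ _ _ colon_pq; rewrite !VstarE colon_pq.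
- exact: minimal_prime_irreducible_component.
Qed.
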